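(* Let $\mathsf{V}$ be a variety of $\mathcal{L}$-algebras that has the congruence extension property and a guarded deduction theorem. Then $\mathsf{V}$ has parametrically definable principal congruences.
   Context: $\mathcal{L}$ is an algebraic first-order language with at least one constant symbol. $\mathsf{V}\models\alpha$ means all members satisfy $\alpha$ under all assignments. $\mathrm{Cg}^{\mathbf{A}}(b_1,b_2)$ is the congruence of $\mathbf{A}$ generated by $(b_1,b_2)$. Congruence extension property: for every $\mathbf{A}\in\mathsf{V}$, every congruence of a subalgebra of $\mathbf{A}$ is the restriction of a congruence of $\mathbf{A}$. Guarded deduction theorem: there exist conjunctions of equations $\gamma(x_1,x_2,y_1,y_2,\overline{z})$ and $\varphi(x_1,x_2,y_1,y_2,\overline{z})$ ($\overline{z}$ a finite set of variables) such that for every finite set of variables $\overline{w}$ with $\overline{w}\cap\overline{z}=\emptyset$, all terms $s_1,s_2,t_1,t_2$ in variables $\overline{w}$ and every conjunction of equations $\pi(\overline{w})$: (i) $\mathsf{V}\models(\pi\mathbin{\&}t_1\approx t_2)\to s_1\approx s_2$ iff $\mathsf{V}\models\pi\to\forall\overline{z}.(\gamma\to\varphi)(s_1,s_2,t_1,t_2,\overline{z})$; (ii) for every equation $\sigma(\overline{w})$, $\mathsf{V}\models(\pi\mathbin{\&}\gamma(s_1,s_2,t_1,t_2,\overline{z}))\to\sigma$ iff $\mathsf{V}\models\pi\to\sigma$. Parametrically definable principal congruences: there is a quantifier-free formula $\xi(x_1,x_2,y_1,y_2,\overline{z})$ such that for every $\mathbf{A}\in\mathsf{V}$ and $a_1,a_2,b_1,b_2\in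 A$, $(a_1,a_2)\in\mathrm{Cg}^{\mathbf{A}}(b_1,b_2)$ iff every $\mathbf{B}\in\mathsf{V}$ extending $\mathbf{A}$ satisfies $\forall\overline{z}.\xi(a_1,a_2,b_1,b_2,\overline{z})$. *)

From Stdlib Require List.
From mathcomp Require Import all_boot.
Set Implicit Arguments. Unset Strict Implicit. Unset Printing Implicit Defensive.

Record language := Language { sym : Type; ar : sym -> nat }.

Definition has_constant (L : language) : Prop := exists f : sym L, ar f = 0.

Record algebra (L : language) := Algebra {
  carrier :> Type;
  op : forall f : sym L, ('I_(ar f) -> carrier) -> carrier }.
Arguments op {L} A f _ : rename.

Inductive term (L : language) : Type :=
| Var : nat -> term L
| App : forall f : sym L, ('I_(ar f) -> term L) -> term L.
Arguments Var {L}.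
Arguments App {L} f _.

Fixpoint eval (L : language) (A : algebra L) (v : nat -> A) (t : term L) : A :=
  match t with
  | Var n => v n
  | App f args => op A f (fun i => eval v (args i))
  end.

Fixpoint vars_in (L : language) (P : nat -> Prop) (t : term L) : Prop :=
  match t with
  | Var n => P n
  | App f args => forall i, vars_in P (args i)
  end.

Fixpoint subst (L : language) (s : nat -> term L) (t : term L) : term L :=
  match t with
  | Var n => s n
  | App f args => App f (fun i => subst s (args i))
  end.

Definition equation (L : language) := (term L * term L)%type.
Definition conj (L : language) := seq (equation L).

Definition eq_holds L (A : algebra L) (v : nat -> A) (e : equation L) : Prop :=
  eval v e.1 = eval v e.2.
Definition conj_holds L (A : algebra L) (v : nat -> A) (c : conj L) : Prop :=
  forall e, List.In e c -> eq_holds v e.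

Definition eq_vars_in L (P : nat -> Prop) (e : equation L) : Prop :=
  vars_in P e.1 /\ vars_in P e.2.
Definition conj_vars_in L (P : nat -> Prop) (c : conj L) : Prop :=
  forall e, List.In e c -> eq_vars_in P e.

Definition eq_subst L (s : nat -> term L) (e : equation L) : equation L :=
  (subst s e.1, subst s e.2).
Definition conj_subst L (s : nat -> term L) (c : conj L) : conj L :=
  map (eq_subst s) c.

Inductive qf (L : language) : Type :=
| QEq : term L -> term L -> qf L
| QNot : qf L -> qf L
| QAnd : qf L -> qf L -> qf L
| QOr : qf L -> qf L -> qf L.

Fixpoint qf_holds L (A : algebra L) (v : nat -> A) (p : qf L) : Prop :=
  match p with
  | QEq t u => eval v t = eval v u
  | QNot p => ~ qf_holds v p
  | QAnd p q => qf_holds v p /\ qf_holds v q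
  | QOr p q => qf_holds v p \/ qf_holds v q
  end.

Fixpoint qf_vars_in L (P : nat -> Prop) (p : qf L) : Prop :=
  match p with
  | QEq t u => vars_in P t /\ vars_in P u
  | QNot p => qf_vars_in P p
  | QAnd p q => qf_vars_in P p /\ qf_vars_in P q
  | QOr p q => qf_vars_in P p /\ qf_vars_in P q
  end.

Definition models L (V : algebra L -> Prop)
  (alpha : forall A : algebra L, (nat -> A) -> Prop) : Prop :=
  forall A : algebra L, V A -> forall v : nat -> A, alpha A v.

Definition variety L (V : algebra L -> Prop) : Prop :=
  exists E : equation L -> Prop,
    forall A : algebra L, V A <-> (forall e, E e -> forall v : nat -> A, eq_holds v e).

Definition compatible L (A : algebra L) (S : A -> Prop) (th : A -> A -> Prop) :=
  forall f (a b : 'I_(ar f) -> A),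
    (forall i, S (a i)) -> (forall i, S (b i)) ->
    (forall i, th (a i) (b i)) -> th (op A f a) (op A f b).

Definition congruence L (A : algebra L) (th : A -> A -> Prop) : Prop :=
  [/\ forall x, th x x, forall x y, th x y -> th y x,
      forall x y z, th x y -> th y z -> th x z & compatible (fun _ => True) th].

Definition Cg L (A : algebra L) (b1 b2 : A) : A -> A -> Prop :=
  fun a1 a2 => forall th, congruence th -> th b1 b2 -> th a1 a2.

Definition subuniverse L (A : algebra L) (S : A -> Prop) : Prop :=
  forall f (a : 'I_(ar f) -> A), (forall i, S (a i)) -> S (op A f a).

(* a congruence of the subalgebra with universe S, as a relation on A
   contained in S x S *)
Definition sub_congruence L (A : algebra L) (S : A -> Prop) (th : A -> A -> Prop) :=
  [/\ forall x y, th x y -> S x /\ S y,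
      forall x, S x -> th x x, forall x y, th x y -> th y x,
      forall x y z, th x y -> th y z -> th x z & compatible S th].

Definition CEP L (V : algebra L -> Prop) : Prop :=
  forall A : algebra L, V A ->
  forall S : A -> Prop, subuniverse S ->
  forall th, sub_congruence S th ->
  exists Th, congruence Th /\ (forall x y, S x -> S y -> (th x y <-> Th x y)).

(* B extends A: an embedding (injective homomorphism) of A into B *)
Definition embedding L (A B : algebra L) (h : A -> B) : Prop :=
  injective h /\ forall f (a : 'I_(ar f) -> A), h (op A f a) = op B f (fun i => h (a i)).

Definition good_vars (x1 x2 y1 y2 : nat) (zs : seq nat) : Prop :=
  uniq [:: x1; x2; y1; y2] /\ (forall z, z \in zs -> z \notin [:: x1; x2; y1; y2]).

Definition in_vars (x1 x2 y1 y2 : nat) (zs : seq nat) : nat -> Prop :=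
  fun n => n \in [:: x1; x2; y1; y2] ++ zs.

Definition subst4 L (x1 x2 y1 y2 : nat) (s1 s2 t1 t2 : term L) : nat -> term L :=
  fun n => if n == x1 then s1 else if n == x2 then s2
           else if n == y1 then t1 else if n == y2 then t2 else Var n.

Definition forall_vars L (A : algebra L) (zs : seq nat) (v : nat -> A)
  (P : (nat -> A) -> Prop) : Prop :=
  forall v' : nat -> A, (forall n, n \notin zs -> v' n = v n) -> P v'.

Definition guarded_deduction_theorem L (V : algebra L -> Prop) : Prop :=
  exists (x1 x2 y1 y2 : nat) (zs : seq nat) (gamma phi : conj L),
  [/\ good_vars x1 x2 y1 y2 zs,
      conj_vars_in (in_vars x1 x2 y1 y2 zs) gamma,
      conj_vars_in (in_vars x1 x2 y1 y2 zs) phi &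
  forall ws : seq nat, (forall n, n \in ws -> n \notin zs) ->
  forall s1 s2 t1 t2 : term L,
    vars_in (fun n => n \in ws) s1 -> vars_in (fun n => n \in ws) s2 ->
    vars_in (fun n => n \in ws) t1 -> vars_in (fun n => n \in ws) t2 ->
  forall pi : conj L, conj_vars_in (fun n => n \in ws) pi ->
  let sg := subst4 x1 x2 y1 y2 s1 s2 t1 t2 in
  (models V (fun A v => (conj_holds v pi /\ eval v t1 = eval v t2) ->
                        eval v s1 = eval v s2)
   <-> models V (fun A v => conj_holds v pi ->
         forall_vars zs v (fun v' => conj_holds v' (conj_subst sg gamma) ->
                                     conj_holds v' (conj_subst sg phi)))) /\
  (forall sigma : equation L, eq_vars_in (fun n => n \in ws) sigma ->
     (models V (fun A v => (conj_holds v pi /\ conj_holds v (conj_subst sg gamma)) ->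
                           eq_holds v sigma)
      <-> models V (fun A v => conj_holds v pi -> eq_holds v sigma)))].

Definition parametrically_definable_principal_congruences L (V : algebra L -> Prop) : Prop :=
  exists (x1 x2 y1 y2 : nat) (zs : seq nat) (xi : qf L),
  [/\ good_vars x1 x2 y1 y2 zs,
      qf_vars_in (in_vars x1 x2 y1 y2 zs) xi &
  forall A : algebra L, V A -> forall a1 a2 b1 b2 : A,
    Cg b1 b2 a1 a2 <->
    (forall (B : algebra L) (h : A -> B), V B -> embedding h ->
       forall v : nat -> B, v x1 = h a1 -> v x2 = h a2 -> v y1 = h b1 -> v y2 = h b2 ->
       qf_holds v xi)].

From mathcomp Require Import all_boot.
From Stdlib Require List Classical ClassicalEpsilon.
From Stdlib Require FunctionalExtensionality PropExtensionality ProofIrrelevance.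
Set Implicit Arguments. Unset Strict Implicit. Unset Printing Implicit Defensive.

(* Take xi := gamma -> phi. By Mal'cev's description of principal congruences,
   (a1, a2) is in Cg(b1, b2) iff some finite fragment pi of the diagram of A
   entails a1 = a2 from b1 = b2 in V.  Clause (i) of the guarded deduction
   theorem turns this into V |= pi -> forall zs, gamma -> phi, which transfers
   to every extension of A in V.  Conversely, freely adjoin to A generators for
   zs subject to gamma.  By clause (ii) this extension is conservative, so A
   embeds in it; there gamma holds, hence phi holds, which is witnessed by a
   finite fragment of the diagram, and clause (i) read backwards gives
   (a1, a2) in Cg(b1, b2). *)

Local Notation funext := FunctionalExtensionality.functional_extensionality.
Local Notation propext := PropExtensionality.propositional_extensionality.

Lemma mem_In (T : eqType) (x : T) (s : seq T) : x \in s -> List.In x s.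
Proof. by elim: s => //= y s IH; rewrite inE => /orP [/eqP ->|/IH]; [left | right]. Qed.

Section Terms.
Variable L : language.

Lemma eval_eq_on (A : algebra L) (P : nat -> Prop) (v w : nat -> A) (t : term L) :
  vars_in P t -> (forall n, P n -> v n = w n) -> eval v t = eval w t.
Proof.
elim: t => [n|f args IH] /= Ht Hvw; first exact: Hvw.
by congr (op A f); apply: funext => i; apply: IH.
Qed.

Lemma eval_subst (A : algebra L) (v : nat -> A) (s : nat -> term L) (t : term L) :
  eval v (subst s t) = eval (fun n => eval v (s n)) t.
Proof. by elim: t => [n|f args IH] //=; congr (op A f); apply: funext => i. Qed.

Lemma conj_holds_eq_on (A : algebra L) (P : nat -> Prop) (v w : nat -> A) (c : conj L) :
  conj_vars_in P c -> (forall n, P n -> v n = w n) ->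
  conj_holds v c <-> conj_holds w c.
Proof.
move=> Hc Hvw; split=> H e He; have [H1 H2] := Hc e He; have := H e He;
  by rewrite /eq_holds (eval_eq_on H1 Hvw) (eval_eq_on H2 Hvw).
Qed.

Lemma conj_holds_subst (A : algebra L) (v : nat -> A) (s : nat -> term L) (c : conj L) :
  conj_holds v (conj_subst s c) <-> conj_holds (fun n => eval v (s n)) c.
Proof.
split=> H e.
- by move=> He; have := H _ (List.in_map (eq_subst s) _ _ He); rewrite /eq_holds !eval_subst.
- by case/List.in_map_iff => e' [<- He']; rewrite /eq_holds !eval_subst; apply: H.
Qed.

Definition qf_conj (x : nat) (c : conj L) : qf L :=
  foldr (fun e p => QAnd (QEq e.1 e.2) p) (QEq (Var x) (Var x)) c.

Definition qf_imp (p q : qf L) : qf L := QOr (QNot p) q.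

Lemma qf_holds_conj (A : algebra L) (v : nat -> A) x (c : conj L) :
  qf_holds v (qf_conj x c) <-> conj_holds v c.
Proof.
elim: c => [|e c IH] /=; first by split => // _ e [].
split=> [[He /IH Hc] e' [<-|He'] //|H]; first exact: Hc.
by split; [apply: H; left | apply/IH => e' He'; apply: H; right].
Qed.

Lemma qf_holds_imp (A : algebra L) (v : nat -> A) (p q : qf L) :
  qf_holds v (qf_imp p q) <-> (qf_holds v p -> qf_holds v q).
Proof.
split=> [[] //|H] /=.
by case: (Classical_Prop.classic (qf_holds v p)) => [/H|]; [right | left].
Qed.

Lemma qf_conj_vars (P : nat -> Prop) x (c : conj L) :
  P x -> conj_vars_in P c -> qf_vars_in P (qf_conj x c).
Proof.
move=> Hx; elim: c => [|e c IH] Hc //=.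
have [H1 H2] := Hc e (or_introl erefl).
by split; [split | apply: IH => e' He'; apply: Hc; right].
Qed.

End Terms.

Section Quotient.
Variables (L : language) (T : algebra L) (th : T -> T -> Prop).
Hypothesis th_cong : congruence th.

Definition quot_carrier := {S : T -> Prop | exists t, S = th t}.

Definition cls (t : T) : quot_carrier := exist _ (th t) (ex_intro _ t erefl).

Definition repr (q : quot_carrier) : T :=
  proj1_sig (ClassicalEpsilon.constructive_indefinite_description _ (proj2_sig q)).

Lemma reprK q : cls (repr q) = q.
Proof.
case: q => S HS; rewrite /repr /=.
case: ClassicalEpsilon.constructive_indefinite_description => t /= Et; subst S.
by congr exist; apply: ProofIrrelevance.proof_irrelevance.
Qed.

Lemma cls_eq x y : cls x = cls y <-> th x y.
Proof.
case: th_cong => th_refl th_sym th_trans _; split.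
- by move=> /(congr1 (@proj1_sig _ _)) /= ->; apply: th_refl.
- move=> Hxy; apply: ProofIrrelevance.ProofIrrelevanceTheory.subset_eq_compat.
  apply: funext => z; apply: propext.
  by split; apply: th_trans; [apply: th_sym|].
Qed.

Definition quot_alg : algebra L :=
  @Algebra L quot_carrier (fun f qs => cls (op T f (fun i => repr (qs i)))).

Lemma cls_op f (a : 'I_(ar f) -> T) : cls (op T f a) = op quot_alg f (fun i => cls (a i)).
Proof.
apply/cls_eq; case: th_cong => _ th_sym _ th_comp; apply: th_comp => // i.
by apply: th_sym; apply/cls_eq; rewrite reprK.
Qed.

Lemma eval_cls (s : nat -> T) (t : term L) :
  eval (fun n => cls (s n) : quot_alg) t = cls (eval s t).
Proof.
elim: t => [n|f args IH] //.
rewrite [RHS]/= cls_op; apply: (congr1 (op quot_alg f)).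
by apply: funext => i; apply: IH.
Qed.

Lemma eval_quot (v : nat -> quot_alg) (t : term L) :
  eval v t = cls (eval (fun n => repr (v n)) t).
Proof. by rewrite -eval_cls; congr eval; apply: funext => n; rewrite reprK. Qed.

End Quotient.

Section GeneratedTerms.
Variables (L : language) (X : Type).

Inductive gterm : Type :=
| Gen : X -> gterm
| Ap : forall f : sym L, ('I_(ar f) -> gterm) -> gterm.

Definition gterm_alg : algebra L := @Algebra L gterm Ap.

Fixpoint geval (C : algebra L) (g : X -> C) (t : gterm) : C :=
  match t with Gen x => g x | Ap f a => op C f (fun i => geval g (a i)) end.

Lemma geval_eval (C : algebra L) (g : X -> C) (s : nat -> gterm_alg) (t : term L) :
  geval g (eval s t) = eval (fun n => geval g (s n)) t.
Proof. by elim: t => [n|f args IH] //=; congr (op C f); apply: funext => i. Qed.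

End GeneratedTerms.
Arguments Gen {L X} x.
Arguments Ap {L X} f _.

Section Diagram.
Variables (L : language) (A : algebra L).

Definition fact := {f : sym L & 'I_(ar f) -> A}.

Definition fact_holds (C : algebra L) (g : A -> C) (x : fact) : Prop :=
  let: existT f a := x in g (op A f a) = op C f (fun i => g (a i)).

Definition respects (C : algebra L) (g : A -> C) (D : seq fact) : Prop :=
  forall x, List.In x D -> fact_holds g x.

Definition support (D : seq fact) : seq A :=
  List.flat_map (fun x : fact => let: existT f a := x in op A f a :: map a (enum 'I_(ar f))) D.

Lemma support_fact (D : seq fact) f (a : 'I_(ar f) -> A) :
  List.In (existT _ f a) D ->
  List.In (op A f a) (support D) /\ forall i, List.In (a i) (support D).
Proof.
move=> Hx; split; first by apply/List.in_flat_map; exists (existT _ f a); split; [|left].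
move=> i; apply/List.in_flat_map; exists (existT _ f a); split => //; right.
by apply: List.in_map; apply: mem_In; rewrite mem_enum.
Qed.

(* Elements of A have no decidable equality, so an element is named by its
   first position in [cs], located classically. *)
Fixpoint idx (cs : seq A) (c : A) : nat :=
  if cs is x :: cs' then
    if ClassicalEpsilon.excluded_middle_informative (c = x) then 0 else (idx cs' c).+1
  else 0.

Lemma idx_lt cs c : List.In c cs -> idx cs c < size cs.
Proof.
elim: cs => //= x cs IH Hc; case: ClassicalEpsilon.excluded_middle_informative => // Hne.
by case: Hc => [Hx|/IH]; [case: Hne|].
Qed.

Lemma nth_idx d cs c : List.In c cs -> nth d cs (idx cs c) = c.
Proof.
elim: cs => //= x cs IH Hc; case: ClassicalEpsilon.excluded_middle_informative => // Hne.
by case: Hc => [Hx|/IH]; [case: Hne|].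
Qed.

Section Naming.
Variables (N : nat) (cs : seq A).

Definition name (c : A) : nat := N + idx cs c.

Definition fact_eq (x : fact) : equation L :=
  let: existT f a := x in (Var (name (op A f a)), App f (fun i => Var (name (a i)))).

Definition diag_conj (D : seq fact) : conj L := map fact_eq D.

Lemma name_in c : List.In c cs -> name c \in iota N (size cs).
Proof. by move=> Hc; rewrite mem_iota leq_addr ltn_add2l idx_lt. Qed.

Lemma nth_name d c : List.In c cs -> nth d cs (name c - N) = c.
Proof. by move=> Hc; rewrite addKn nth_idx. Qed.

Lemma diag_conj_vars (D : seq fact) :
  (forall c, List.In c (support D) -> List.In c cs) ->
  conj_vars_in (fun n => n \in iota N (size cs)) (diag_conj D).
Proof.
move=> sub e /List.in_map_iff [[f a] [<- Hx]]; have [Hop Hargs] := support_fact Hx.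
by split=> /= [|i]; apply/name_in/sub.
Qed.

Lemma diag_conj_respects (C : algebra L) (w : nat -> C) (D : seq fact) :
  conj_holds w (diag_conj D) -> respects (fun c => w (name c)) D.
Proof. by move=> H [f a] Hx; apply: (H _ (List.in_map fact_eq _ _ Hx)). Qed.

Lemma respects_diag_conj (C : algebra L) (g : A -> C) d (D : seq fact) :
  (forall c, List.In c (support D) -> List.In c cs) -> respects g D ->
  conj_holds (fun n => g (nth d cs (n - N))) (diag_conj D).
Proof.
move=> sub Hg e /List.in_map_iff [[f a] [<- Hx]]; have [Hop Hargs] := support_fact Hx.
rewrite /eq_holds /= nth_name; last exact: sub.
by rewrite (Hg _ Hx); congr (op C f); apply: funext => i; rewrite nth_name //; apply: sub.
Qed.

End Naming.
End Diagram.

Section FiniteEntailment.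
Variables (L : language) (V : algebra L -> Prop) (A : algebra L) (X : Type) (j : A -> X).
Variable extra : forall C : algebra L, (X -> C) -> Prop.

(* Only finite fragments [D] of the diagram are allowed, so that every
   entailment can be written down as a conjunction of equations. *)
Definition entailed_by (D : seq (fact A)) (t1 t2 : gterm_alg L X) : Prop :=
  forall C, V C -> forall g : X -> C,
    respects (fun c => g (j c)) D -> extra g -> geval g t1 = geval g t2.

Definition fin_entailed (t1 t2 : gterm_alg L X) : Prop := exists D, entailed_by D t1 t2.

Lemma entailed_by_sub D D' t1 t2 :
  (forall x, List.In x D -> List.In x D') -> entailed_by D t1 t2 -> entailed_by D' t1 t2.
Proof. by move=> sub H C HC g HD; apply: H => // x /sub; apply: HD. Qed.

Lemma fin_entailed_all (Y : Type) (F1 F2 : Y -> gterm L X) (l : seq Y) :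
  (forall y, List.In y l -> fin_entailed (F1 y) (F2 y)) ->
  exists D, forall y, List.In y l -> entailed_by D (F1 y) (F2 y).
Proof.
elim: l => [|y l IH] Hl; first by exists [::].
have [D1 H1] := Hl y (or_introl erefl).
have [D2 H2] := IH (fun y' Hy' => Hl y' (or_intror Hy')).
exists (D1 ++ D2) => y' [<-|Hy'].
- by apply: entailed_by_sub H1 => x Hx; apply: List.in_or_app; left.
- by apply: entailed_by_sub (H2 _ Hy') => x Hx; apply: List.in_or_app; right.
Qed.

Lemma fin_entailed_congruence : congruence fin_entailed.
Proof.
split.
- by move=> t; exists [::].
- by move=> t1 t2 [D H]; exists D => C HC g HD Hg; rewrite (H C HC g HD Hg).
- move=> t1 t2 t3 H12 H23.
  have [D HD] : exists D, forall p, List.In p [:: (t1, t2); (t2, t3)] -> entailed_by D p.1 p.2.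
    by apply: fin_entailed_all => p [<-|[<-|[]]].
  exists D => C HC g HgD Hg.
  by rewrite (HD (t1, t2) _ C HC g HgD Hg) ?(HD (t2, t3) _ C HC g HgD Hg) /=; tauto.
- move=> f a b _ _ Hab; have [D HD] := fin_entailed_all (l := enum 'I_(ar f)) (fun i _ => Hab i).
  exists D => C HC g HgD Hg /=; congr (op C f); apply: funext => i.
  by apply: HD => //; apply: mem_In; rewrite mem_enum.
Qed.

Lemma fin_entailed_fact f (a : 'I_(ar f) -> A) :
  fin_entailed (Gen (j (op A f a))) (Ap f (fun i => Gen (j (a i)))).
Proof. by exists [:: existT _ f a] => C HC g HgD _; apply: (HgD _ (or_introl erefl)). Qed.

Lemma fin_entailed_extra (t1 t2 : gterm L X) :
  (forall C, V C -> forall g : X -> C, extra g -> geval g t1 = geval g t2) ->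
  fin_entailed t1 t2.
Proof. by move=> H; exists [::] => C HC g _; apply: H. Qed.

Definition presented : algebra L := quot_alg fin_entailed.

End FiniteEntailment.

Section Variety.
Variables (L : language) (V : algebra L -> Prop) (E : equation L -> Prop).
Hypothesis V_eqn :
  forall A : algebra L, V A <-> (forall e, E e -> forall v : nat -> A, eq_holds v e).

Lemma quot_in_variety (T : algebra L) (th : T -> T -> Prop) (th_cong : congruence th) :
  (forall e, E e -> forall s : nat -> T, th (eval s e.1) (eval s e.2)) ->
  V (quot_alg th).
Proof.
move=> H; apply/V_eqn => e He v.
by rewrite /eq_holds !(eval_quot th_cong); apply/(cls_eq th_cong)/H.
Qed.

Lemma presentation_in_variety (A : algebra L) (X : Type) (j : A -> X)
    (extra : forall C : algebra L, (X -> C) -> Prop) :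
  V (presented V j extra).
Proof.
apply: quot_in_variety (fin_entailed_congruence V j extra) _ => e He s.
by apply: fin_entailed_extra => C HC g _; rewrite !geval_eval; apply: (proj1 (V_eqn C) HC).
Qed.

Lemma Cg_finitely_entailed (A : algebra L) (a1 a2 b1 b2 : A) : V A ->
  Cg b1 b2 a1 a2 <->
  exists D : seq (fact A), forall C, V C -> forall g : A -> C,
    respects g D -> g b1 = g b2 -> g a1 = g a2.
Proof.
move=> HA; split.
- pose extra C (g : A -> C) := g b1 = g b2.
  have [FE_refl FE_sym FE_trans FE_comp] := fin_entailed_congruence V id extra.
  pose th c d := fin_entailed V id extra (Gen c) (Gen d).
  have th_cong : congruence th.
    split=> [c|c d|c d e|f a b _ _ Hab]; [exact: FE_refl | exact: FE_sym | exact: FE_trans|].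
    apply: (FE_trans _ _ _ (fin_entailed_fact _ _ _ a)).
    by apply: (FE_trans _ _ _ _ (FE_sym _ _ (fin_entailed_fact _ _ _ b))); apply: FE_comp.
  by move=> /(_ th th_cong) [|D HD]; [apply: fin_entailed_extra | exists D].
- move=> [D HD] th th_cong Hb; apply/(cls_eq th_cong).
  apply: (HD (quot_alg th) _ (cls th)); last by apply/cls_eq.
  + apply: (quot_in_variety th_cong) => e He s.
    by rewrite (proj1 (V_eqn A) HA e He s); case: th_cong.
  + by move=> [f a] _; apply: cls_op.
Qed.

End Variety.

Section GuardedDeduction.
Variables (L : language) (V : algebra L -> Prop) (E : equation L -> Prop).
Hypothesis V_eqn :
  forall A : algebra L, V A <-> (forall e, E e -> forall v : nat -> A, eq_holds v e).
Variables (x1 x2 y1 y2 : nat) (zs : seq nat) (gamma phi : conj L).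
Hypothesis xs_zs : good_vars x1 x2 y1 y2 zs.
Hypothesis gamma_vars : conj_vars_in (in_vars x1 x2 y1 y2 zs) gamma.
Hypothesis phi_vars : conj_vars_in (in_vars x1 x2 y1 y2 zs) phi.
Hypothesis gdt : forall ws : seq nat, (forall n, n \in ws -> n \notin zs) ->
  forall s1 s2 t1 t2 : term L,
    vars_in (fun n => n \in ws) s1 -> vars_in (fun n => n \in ws) s2 ->
    vars_in (fun n => n \in ws) t1 -> vars_in (fun n => n \in ws) t2 ->
  forall pi : conj L, conj_vars_in (fun n => n \in ws) pi ->
  let sg := subst4 x1 x2 y1 y2 s1 s2 t1 t2 in
  (models V (fun A v => (conj_holds v pi /\ eval v t1 = eval v t2) ->
                        eval v s1 = eval v s2)
   <-> models V (fun A v => conj_holds v pi ->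
         forall_vars zs v (fun v' => conj_holds v' (conj_subst sg gamma) ->
                                     conj_holds v' (conj_subst sg phi)))) /\
  (forall sigma : equation L, eq_vars_in (fun n => n \in ws) sigma ->
     (models V (fun A v => (conj_holds v pi /\ conj_holds v (conj_subst sg gamma)) ->
                           eq_holds v sigma)
      <-> models V (fun A v => conj_holds v pi -> eq_holds v sigma))).

Definition fresh : nat := (\max_(z <- zs) z).+1.

Lemma iota_fresh k n : n \in iota fresh k -> n \notin zs.
Proof.
rewrite mem_iota => /andP [Hn _]; apply/negP => Hz.
have Hmax : n <= \max_(z <- zs) z := leq_bigmax_seq _ Hz isT.
by have := leq_trans Hn Hmax; rewrite ltnn.
Qed.

Section Instance.
Variables (A : algebra L) (a1 a2 b1 b2 : A).
Hypothesis HA : V A.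

Definition params (es : seq A) : seq A := [:: a1, a2, b1, b2 & es].

Local Notation nm es := (name fresh (params es)).
Local Notation ws es := (iota fresh (size (params es))).
Local Notation pi es D := (diag_conj fresh (params es) D).

Definition inst (es : seq A) : nat -> term L :=
  subst4 x1 x2 y1 y2 (Var (nm es a1)) (Var (nm es a2)) (Var (nm es b1)) (Var (nm es b2)).

Lemma params_in es :
  [/\ List.In a1 (params es), List.In a2 (params es),
      List.In b1 (params es) & List.In b2 (params es)].
Proof. by split; do ?[by left | right]. Qed.

Lemma diag_params_vars es (D : seq (fact A)) :
  (forall c, List.In c (support D) -> List.In c es) ->
  conj_vars_in (fun n => n \in ws es) (pi es D).
Proof. by move=> sub; apply: diag_conj_vars => c /sub Hc; do 4 right. Qed.

Lemma gdt_params es (D : seq (fact A)) :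
  (forall c, List.In c (support D) -> List.In c es) ->
  let sg := inst es in
  (models V (fun C w => conj_holds w (pi es D) /\ w (nm es b1) = w (nm es b2) ->
                        w (nm es a1) = w (nm es a2))
   <-> models V (fun C w => conj_holds w (pi es D) ->
         forall_vars zs w (fun w' => conj_holds w' (conj_subst sg gamma) ->
                                     conj_holds w' (conj_subst sg phi)))) /\
  (forall c d, List.In c (params es) -> List.In d (params es) ->
     (models V (fun C w => conj_holds w (pi es D) /\ conj_holds w (conj_subst sg gamma) ->
                           w (nm es c) = w (nm es d))
      <-> models V (fun C w => conj_holds w (pi es D) -> w (nm es c) = w (nm es d)))).
Proof.
move=> sub.
have name_var c : List.In c (params es) -> vars_in (fun n => n \in ws es) (@Var L (nm es c)).
  exact: name_in.
have [p1 p2 p3 p4] := params_in es.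
have [gdt_i gdt_ii] := gdt (@iota_fresh _) (name_var _ p1) (name_var _ p2) (name_var _ p3)
  (name_var _ p4) (diag_params_vars sub).
split=> // c d Hc Hd.
by apply: (gdt_ii (Var (nm es c), Var (nm es d))); split; apply: name_var.
Qed.

Lemma conj_holds_inst es (C : algebra L) (w v : nat -> C) (c : conj L) :
  conj_vars_in (in_vars x1 x2 y1 y2 zs) c ->
  w (nm es a1) = v x1 -> w (nm es a2) = v x2 -> w (nm es b1) = v y1 -> w (nm es b2) = v y2 ->
  (forall z, z \in zs -> w z = v z) ->
  conj_holds w (conj_subst (inst es) c) <-> conj_holds v c.
Proof.
move=> Hc e1 e2 e3 e4 ez; rewrite conj_holds_subst; apply: (conj_holds_eq_on Hc) => n.
rewrite /inst /subst4; case: ifP => [/eqP -> //|n1]; case: ifP => [/eqP -> //|n2].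
case: ifP => [/eqP -> //|n3]; case: ifP => [/eqP -> //|n4].
by rewrite /in_vars mem_cat !inE n1 n2 n3 n4 => /ez.
Qed.

Lemma Cg_guarded_phi : Cg b1 b2 a1 a2 ->
  forall (B : algebra L) (h : A -> B), V B ->
  (forall f a, h (op A f a) = op B f (fun i => h (a i))) ->
  forall v : nat -> B, v x1 = h a1 -> v x2 = h a2 -> v y1 = h b1 -> v y2 = h b2 ->
  conj_holds v gamma -> conj_holds v phi.
Proof.
move=> /(Cg_finitely_entailed V_eqn _ _ _ _ HA) [D HD] B h HB h_morph v v1 v2 v3 v4.
set es := support D; have sub : forall c, List.In c (support D) -> List.In c es by [].
pose w n := if n \in zs then v n else h (nth a1 (params es) (n - fresh)).
have w_nm c : List.In c (params es) -> w (nm es c) = h c.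
  by move=> Hc; rewrite /w (negbTE (iota_fresh (name_in _ Hc))) nth_name.
have w_pi : conj_holds w (pi es D).
  have w_ws n : n \in ws es -> w n = h (nth a1 (params es) (n - fresh)).
    by move=> /iota_fresh /negbTE Hn; rewrite /w Hn.
  apply: (proj2 (conj_holds_eq_on (diag_params_vars sub) w_ws)).
  by apply: respects_diag_conj => [c Hc|[f a] _]; [do 4 right | apply: h_morph].
have Hab : models V (fun C u => conj_holds u (pi es D) /\ u (nm es b1) = u (nm es b2) ->
                                u (nm es a1) = u (nm es a2)).
  by move=> C HC u [/diag_conj_respects Hu Hb]; apply: (HD C HC (fun c => u (nm es c))).
have [p1 p2 p3 p4] := params_in es.
have w_inst c : conj_vars_in (in_vars x1 x2 y1 y2 zs) c ->
    conj_holds w (conj_subst (inst es) c) <-> conj_holds v c.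
  move=> Hc; apply: conj_holds_inst; rewrite // ?w_nm ?v1 ?v2 ?v3 ?v4 // => z Hz.
  by rewrite /w Hz.
move=> /(w_inst _ gamma_vars) Hg; apply/(w_inst _ phi_vars).
exact: ((gdt_params sub).1.1 Hab B HB w w_pi w (fun _ _ => erefl) Hg).
Qed.

Definition gen_of (n : nat) : A + nat :=
  if n == x1 then inl a1 else if n == x2 then inl a2
  else if n == y1 then inl b1 else if n == y2 then inl b2 else inr n.

Definition guard (C : algebra L) (g : A + nat -> C) : Prop :=
  conj_holds (fun n => g (gen_of n)) gamma.

Local Notation FE := (fin_entailed V inl guard).
Let FE_cong := fin_entailed_congruence V inl guard.

Definition guarded_ext : algebra L := presented V inl guard.
Definition emb (c : A) : guarded_ext := cls FE (Gen (inl c)).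
Definition gen_term (n : nat) : gterm_alg L (A + nat) := Gen (gen_of n).
Definition guarded_gen (n : nat) : guarded_ext := cls FE (gen_term n).

Lemma emb_morph f (a : 'I_(ar f) -> A) :
  emb (op A f a) = op guarded_ext f (fun i => emb (a i)).
Proof.
rewrite /emb (proj2 (cls_eq FE_cong _ _) (fin_entailed_fact _ _ _ a)).
exact: (cls_op FE_cong (fun i => Gen (inl (a i)))).
Qed.

Lemma guarded_gen_params :
  [/\ guarded_gen x1 = emb a1, guarded_gen x2 = emb a2,
      guarded_gen y1 = emb b1 & guarded_gen y2 = emb b2].
Proof.
have [/= + _] := xs_zs; rewrite !inE !negb_or.
move=> /and4P [/and3P [n12 n13 n14] /andP [n23 n24] n34 _].
rewrite /guarded_gen /gen_term /gen_of !eqxx [x2 == x1]eq_sym [y1 == x1]eq_sym.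
rewrite [y1 == x2]eq_sym [y2 == x1]eq_sym [y2 == x2]eq_sym [y2 == y1]eq_sym.
by rewrite (negbTE n12) (negbTE n13) (negbTE n14) (negbTE n23) (negbTE n24) (negbTE n34).
Qed.

Lemma guarded_gen_gamma : conj_holds guarded_gen gamma.
Proof.
move=> e He; rewrite /eq_holds /guarded_gen !(eval_cls FE_cong gen_term).
apply/(cls_eq FE_cong).
by apply: fin_entailed_extra => C HC g Hg; rewrite !geval_eval; apply: Hg.
Qed.

Definition read es (C : algebra L) (w : nat -> C) (x : A + nat) : C :=
  match x with inl c => w (nm es c) | inr n => w n end.

Lemma read_gen_of es (C : algebra L) (w : nat -> C) n :
  read es w (gen_of n) = eval w (inst es n).
Proof. by rewrite /gen_of /inst /subst4; do 4 case: ifP => //. Qed.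

Lemma read_guard es (C : algebra L) (w : nat -> C) :
  conj_holds w (conj_subst (inst es) gamma) -> guard (read es w).
Proof. by rewrite conj_holds_subst /guard (funext _ _ (read_gen_of es w)). Qed.

Lemma emb_inj : injective emb.
Proof.
move=> c d /(cls_eq FE_cong) [D HD].
set es := [:: c, d & support D].
have sub : forall x, List.In x (support D) -> List.In x es by move=> x Hx; do 2 right.
have [Hc Hd] : List.In c (params es) /\ List.In d (params es).
  by split; do 4 right; [left | right; left].
have Hcd : models V (fun C u =>
    conj_holds u (pi es D) /\ conj_holds u (conj_subst (inst es) gamma) ->
    u (nm es c) = u (nm es d)).
  move=> C HC u [/diag_conj_respects HuD /read_guard Hg].
  exact: (HD C HC (read es u) HuD Hg).
have := proj1 ((gdt_params sub).2 c d Hc Hd) Hcd A HA (fun n => nth c (params es) (n - fresh)).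
rewrite /= !nth_name //; apply.
by apply: (respects_diag_conj (g := id)) => [x /sub Hx|[f a] _] //; do 4 right.
Qed.

Lemma Cg_of_guarded_phi : conj_holds guarded_gen phi -> Cg b1 b2 a1 a2.
Proof.
move=> Hphi.
have [D HD] : exists D, forall e, List.In e phi ->
    entailed_by V inl guard D (eval gen_term e.1) (eval gen_term e.2).
  apply: fin_entailed_all => e He; apply/(cls_eq FE_cong).
  by rewrite -!(eval_cls FE_cong); apply: Hphi.
set es := support D; have sub : forall c, List.In c (support D) -> List.In c es by [].
have Hgp : models V (fun C u => conj_holds u (pi es D) -> forall_vars zs u (fun u' =>
    conj_holds u' (conj_subst (inst es) gamma) -> conj_holds u' (conj_subst (inst es) phi))).
  move=> C HC u HuD u' Hu' /read_guard Hg.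
  have Hu'D : conj_holds u' (pi es D).
    apply: (proj1 (conj_holds_eq_on (diag_params_vars sub) _) HuD) => n /iota_fresh Hn.
    by rewrite Hu'.
  have read_inst : (fun n => geval (read es u') (gen_term n)) = (fun n => eval u' (inst es n)).
    by apply: funext => n; apply: read_gen_of.
  rewrite conj_holds_subst -read_inst => e He.
  by have := HD e He C HC _ (diag_conj_respects Hu'D) Hg; rewrite /eq_holds !geval_eval.
apply/(Cg_finitely_entailed V_eqn _ _ _ _ HA); exists D => C HC g HgD Hb.
have [p1 p2 p3 p4] := params_in es.
have := proj2 (gdt_params sub).1 Hgp C HC (fun n => g (nth a1 (params es) (n - fresh))).
rewrite /= !nth_name //; apply; split => //.
by apply: respects_diag_conj => // x /sub Hx; do 4 right.
Qed.

End Instance.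
End GuardedDeduction.

Theorem proposition5p6 (L : language) (V : algebra L -> Prop) :
  has_constant L -> variety V -> CEP V -> guarded_deduction_theorem V ->
  parametrically_definable_principal_congruences V.
Proof.
move=> _ [E V_eqn] _ [x1 [x2 [y1 [y2 [zs [gamma [phi [xs_zs gamma_vars phi_vars gdt]]]]]]]].
have x1_in : in_vars x1 x2 y1 y2 zs x1 by rewrite /in_vars inE eqxx.
exists x1, x2, y1, y2, zs, (qf_imp (qf_conj x1 gamma) (qf_conj x1 phi)).
split=> //; first by split; apply: qf_conj_vars.
move=> A HA a1 a2 b1 b2; split.
- move=> Hcg B h HB [_ h_morph] v v1 v2 v3 v4; rewrite qf_holds_imp !qf_holds_conj.
  exact: (Cg_guarded_phi V_eqn gamma_vars phi_vars gdt HA Hcg HB h_morph v1 v2 v3 v4).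
- move=> Hxi; apply: (Cg_of_guarded_phi V_eqn gdt HA).
  have [g1 g2 g3 g4] := guarded_gen_params V gamma xs_zs a1 a2 b1 b2.
  have emb_embedding : embedding (emb V x1 x2 y1 y2 gamma a1 a2 b1 b2).
    by split; [exact: (emb_inj gdt HA) | exact: emb_morph].
  have := Hxi _ _ (presentation_in_variety V_eqn _ _) emb_embedding _ g1 g2 g3 g4.
  by rewrite qf_holds_imp !qf_holds_conj; apply; apply: guarded_gen_gamma.
Qed.
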